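(* Let $G$ be a finite simple cubic graph with no subgraph (not necessarily induced) isomorphic to $L$. Then $G$ has an $\mathcal{F}$-partitioning, i.e., there exist pairwise vertex-disjoint subgraphs $Q_1,\dots,Q_k$ of $G$ (not necessarily induced) with $V(Q_1)\cup\dots\cup V(Q_k)=V(G)$, such that each $Q_i$ is isomorphic to one of the graphs $C_3$, $C_4$, $K_{2,3}$, $X$, $Y$, $Z$.
   Context: All graphs are finite and simple. The graph $L$ is the tree on $10$ vertices consisting of a central vertex $c$ adjacent to three vertices $x_1,x_2,x_3$, where each $x_i$ is further adjacent to two leaves $y_{i,1},y_{i,2}$ (all ten vertices distinct; $9$ edges). $C_n$ denotes the cycle on $n$ vertices and $K_{2,3}$ the complete bipartite graph with parts of sizes $2$ and $3$. The graph $X$ (the ''house'') has vertices $a,b,c,d,e$ and edges $ab,bc,cd,da,ea,eb$ (a $4$-cycle and a triangle sharing the edge $ab$). The graph $Y$ (the $2\times 3$ grid / domino) has vertices $a_1,a_2,a_3,b_1,b_2,b_3$ and edges $a_1a_2,a_2a_3,b_1b_2,b_2b_3,a_1b_1,a_2b_2,a_3b_3$. The graph $Z$ is obtained from $Y$ by adding a new vertex $w$ adjacent to $a_1$ and $a_3$. An $\mathcal{F}$-partitioning of $G$, for the family $\mathcal{F}=\{C_3,C_4,K_{2,3},X,Y,Z\}$, is a set of pairwise vertex-disjoint subgraphs of $G$, each isomorphic to a member of $\mathcal{F}$, covering every vertex of $G$. *)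

(* A simple graph is a finType T with a symmetric irreflexive
   adjacency relation e : rel T. *)
From mathcomp Require Import all_boot.
Set Implicit Arguments. Unset Strict Implicit. Unset Printing Implicit Defensive.

Definition cubic (T : finType) (e : rel T) : Prop :=
  forall x : T, #|[set y | e x y]| = 3.

(* A small pattern graph on vertex set 'I_n given by an (undirected) edge list. *)
Definition embeds (T : finType) (e : rel T) (n : nat) (E : seq (nat * nat))
    (f : 'I_n -> T) : Prop :=
  injective f /\
  forall i j : 'I_n, (nat_of_ord i, nat_of_ord j) \in E -> e (f i) (f j).

(* The tree L: c=0, x1,x2,x3 = 1,2,3, leaves of x1: 4,5; of x2: 6,7; of x3: 8,9. *)
Definition L_edges : seq (nat * nat) :=
  [:: (0,1); (0,2); (0,3); (1,4); (1,5); (2,6); (2,7); (3,8); (3,9)].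

Definition contains_L (T : finType) (e : rel T) : Prop :=
  exists f : 'I_10 -> T, embeds e L_edges f.

Inductive Fgraph := FC3 | FC4 | FK23 | FX | FY | FZ.

Definition Fnv (H : Fgraph) : nat :=
  match H with FC3 => 3 | FC4 => 4 | FK23 => 5 | FX => 5 | FY => 6 | FZ => 7 end.

Definition Fedges (H : Fgraph) : seq (nat * nat) :=
  match H with
  | FC3 => [:: (0,1); (1,2); (2,0)]
  | FC4 => [:: (0,1); (1,2); (2,3); (3,0)]
  (* parts {0,1} and {2,3,4} *)
  | FK23 => [:: (0,2); (0,3); (0,4); (1,2); (1,3); (1,4)]
  (* a=0,b=1,c=2,d=3,e=4: ab,bc,cd,da,ea,eb *)
  | FX => [:: (0,1); (1,2); (2,3); (3,0); (4,0); (4,1)]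
  (* a1=0,a2=1,a3=2,b1=3,b2=4,b3=5 *)
  | FY => [:: (0,1); (1,2); (3,4); (4,5); (0,3); (1,4); (2,5)]
  (* Y plus w=6 adjacent to a1=0 and a3=2 *)
  | FZ => [:: (0,1); (1,2); (3,4); (4,5); (0,3); (1,4); (2,5); (6,0); (6,2)]
  end.

Definition spans_copy (T : finType) (e : rel T) (H : Fgraph) (B : {set T}) : Prop :=
  exists f : 'I_(Fnv H) -> T, embeds e (Fedges H) f /\ B = [set f i | i in 'I_(Fnv H)].

Definition F_partitioning (T : finType) (e : rel T) : Prop :=
  exists P : {set {set T}},
    partition P [set: T] /\
    forall B, B \in P -> exists H : Fgraph, spans_copy e H B.

From mathcomp Require Import all_boot zify.
From HB Require Import structures.
Set Implicit Arguments. Unset Strict Implicit. Unset Printing Implicit Defensive.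

(* A partial F-partitioning whose blocks miss a vertex u can always be enlarged.
   Since G has no subgraph L, u lies on a triangle or on a 4-cycle: otherwise u,
   its three neighbours and their six further neighbours would be ten distinct
   vertices spanning a copy of L.  Every member of F has minimum degree 2, so a
   covered vertex has at most one neighbour outside its block.  Hence a short
   cycle through u either avoids all blocks and becomes a new block, or meets a
   single block B in one of two configurations: (A) u is adjacent to two
   degree-2 vertices of B that are adjacent or have a common neighbour in B, or
   (B) u and an uncovered neighbour v of u are adjacent to the ends of an edge
   of B between degree-2 vertices.  In each configuration an explicit table,
   checked by computation, splits B plus the new vertices into members of F. *)

Lemma Fgraph_eq_dec : comparable Fgraph.
Proof. by move=> H H'; rewrite /decidable; decide equality. Qed.
HB.instance Definition _ := hasDecEq.Build Fgraph (compareP Fgraph_eq_dec).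

Notation recipe := (seq (Fgraph * seq nat)).

Definition edge_in (E : seq (nat * nat)) (a b : nat) : bool :=
  ((a, b) \in E) || ((b, a) \in E).

Definition padj (H : Fgraph) : nat -> nat -> bool := edge_in (Fedges H).

Definition pdeg (H : Fgraph) (i : nat) : nat := count (padj H i) (iota 0 (Fnv H)).

Lemma pdeg_ge2 H i : i < Fnv H -> 1 < pdeg H i.
Proof. by case: H; do 7? case: i => [|i] //. Qed.

Lemma padjC H i j : padj H i j = padj H j i.
Proof. by rewrite /padj /edge_in orbC. Qed.

Lemma Fedges_bounded H : all (fun ij => (ij.1 < Fnv H) && (ij.2 < Fnv H)) (Fedges H).
Proof. by case: H. Qed.

Lemma card_padj H i : #|[set j : 'I_(Fnv H) | padj H i j]| = pdeg H i.
Proof.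
rewrite cardsE cardE /pdeg -val_enum_ord count_map.
by rewrite /enum_mem size_filter (@eq_filter _ _ predT) ?filter_predT.
Qed.

(* An entry [(H, s)] of a recipe is a copy of [H] whose vertex [k] is the vertex
   [s`_k] of a small graph on [0..N-1] with edge list [E]. *)
Definition block_fits (N : nat) (E : seq (nat * nat)) (r : Fgraph * seq nat) : bool :=
  [&& size r.2 == Fnv r.1, uniq r.2, all (fun k => k < N) r.2 &
      all (fun ij => edge_in E (nth 0 r.2 ij.1) (nth 0 r.2 ij.2)) (Fedges r.1)].

Definition support (rs : recipe) : seq nat := flatten [seq r.2 | r <- rs].

Definition recipe_valid (N : nat) (E : seq (nat * nat)) (rs : recipe) : bool :=
  all (block_fits N E) rs && uniq (support rs).

Definition condA (H : Fgraph) (i j : nat) : bool :=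
  [&& i != j, pdeg H i == 2, pdeg H j == 2 &
      padj H i j || has (fun k => padj H i k && padj H k j) (iota 0 (Fnv H))].

Definition condB (H : Fgraph) (i j : nat) : bool :=
  [&& pdeg H i == 2, pdeg H j == 2 & padj H i j].

(* The block keeps the numbering [0..n-1] of [Fedges H]; the new vertex [u] of
   configuration A is [n], the new vertices [u], [v] of configuration B are [n],
   [n.+1]; [i] and [j] are where they attach. *)
Definition edgesA (H : Fgraph) (i j : nat) : seq (nat * nat) :=
  Fedges H ++ [:: (Fnv H, i); (Fnv H, j)].

Definition edgesB (H : Fgraph) (i j : nat) : seq (nat * nat) :=
  Fedges H ++ [:: (Fnv H, i); ((Fnv H).+1, j); (Fnv H, (Fnv H).+1)].

(* Configuration A is symmetric in [i] and [j]: its table is indexed by the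
   unordered pair. *)
Definition recipeA (H : Fgraph) (i j : nat) : recipe :=
  match H, minn i j, maxn i j with
  | FC3, 0, 1 => [:: (FC4, [:: 0; 2; 1; 3])]
  | FC3, 0, 2 => [:: (FC4, [:: 0; 1; 2; 3])]
  | FC3, 1, 2 => [:: (FC4, [:: 0; 1; 3; 2])]
  | FC4, 0, 1 => [:: (FX, [:: 0; 1; 2; 3; 4])]
  | FC4, 0, 2 => [:: (FK23, [:: 0; 2; 1; 3; 4])]
  | FC4, 0, 3 => [:: (FX, [:: 0; 3; 2; 1; 4])]
  | FC4, 1, 2 => [:: (FX, [:: 1; 2; 3; 0; 4])]
  | FC4, 1, 3 => [:: (FK23, [:: 1; 3; 0; 2; 4])]
  | FC4, 2, 3 => [:: (FX, [:: 2; 3; 0; 1; 4])]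
  | FK23, 2, 3 => [:: (FY, [:: 0; 2; 5; 4; 1; 3])]
  | FK23, 2, 4 => [:: (FY, [:: 0; 2; 5; 3; 1; 4])]
  | FK23, 3, 4 => [:: (FY, [:: 0; 3; 5; 2; 1; 4])]
  | FX, 2, 3 => [:: (FC3, [:: 0; 1; 4]); (FC3, [:: 2; 3; 5])]
  | FX, 2, 4 => [:: (FY, [:: 0; 1; 4; 3; 2; 5])]
  | FX, 3, 4 => [:: (FY, [:: 1; 0; 4; 2; 3; 5])]
  | FY, 0, 2 => [:: (FZ, [:: 0; 1; 2; 3; 4; 5; 6])]
  | FY, 0, 3 => [:: (FC3, [:: 0; 3; 6]); (FC4, [:: 1; 2; 5; 4])]
  | FY, 2, 5 => [:: (FC3, [:: 2; 5; 6]); (FC4, [:: 0; 1; 4; 3])]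
  | FY, 3, 5 => [:: (FZ, [:: 1; 4; 3; 2; 5; 6; 0])]
  | FZ, 3, 5 => [:: (FC4, [:: 0; 1; 2; 6]); (FC4, [:: 3; 4; 5; 7])]
  | FZ, 3, 6 => [:: (FC4, [:: 0; 3; 7; 6]); (FC4, [:: 1; 2; 5; 4])]
  | FZ, 5, 6 => [:: (FC4, [:: 0; 1; 4; 3]); (FC4, [:: 2; 5; 7; 6])]
  | _, _, _ => [::]
  end.

Definition recipeB (H : Fgraph) (i j : nat) : recipe :=
  match H, i, j with
  | FC3, 0, 1 => [:: (FC4, [:: 0; 1; 4; 3])]
  | FC3, 0, 2 => [:: (FC4, [:: 0; 2; 4; 3])]
  | FC3, 1, 0 => [:: (FC4, [:: 0; 1; 3; 4])]
  | FC3, 1, 2 => [:: (FC4, [:: 1; 2; 4; 3])]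
  | FC3, 2, 0 => [:: (FC4, [:: 0; 2; 3; 4])]
  | FC3, 2, 1 => [:: (FC4, [:: 1; 2; 3; 4])]
  | FC4, 0, 1 => [:: (FY, [:: 2; 1; 5; 3; 0; 4])]
  | FC4, 0, 3 => [:: (FY, [:: 1; 0; 4; 2; 3; 5])]
  | FC4, 1, 0 => [:: (FY, [:: 2; 1; 4; 3; 0; 5])]
  | FC4, 1, 2 => [:: (FY, [:: 0; 1; 4; 3; 2; 5])]
  | FC4, 2, 1 => [:: (FY, [:: 0; 1; 5; 3; 2; 4])]
  | FC4, 2, 3 => [:: (FY, [:: 0; 3; 5; 1; 2; 4])]
  | FC4, 3, 0 => [:: (FY, [:: 1; 0; 5; 2; 3; 4])]
  | FC4, 3, 2 => [:: (FY, [:: 0; 3; 4; 1; 2; 5])]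
  | FX, 2, 3 => [:: (FY, [:: 0; 3; 6; 1; 2; 5])]
  | FX, 3, 2 => [:: (FY, [:: 0; 3; 5; 1; 2; 6])]
  | FY, 0, 3 => [:: (FC4, [:: 0; 3; 7; 6]); (FC4, [:: 1; 2; 5; 4])]
  | FY, 2, 5 => [:: (FC4, [:: 0; 1; 4; 3]); (FC4, [:: 2; 5; 7; 6])]
  | FY, 3, 0 => [:: (FC4, [:: 0; 3; 6; 7]); (FC4, [:: 1; 2; 5; 4])]
  | FY, 5, 2 => [:: (FC4, [:: 0; 1; 4; 3]); (FC4, [:: 2; 5; 6; 7])]
  | _, _, _ => [::]
  end.

Definition all_pairs (n : nat) (p : nat -> nat -> bool) : bool :=
  all (fun i => all (p i) (iota 0 n)) (iota 0 n).

Lemma all_pairsP n p i j : all_pairs n p -> i < n -> j < n -> p i j.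
Proof.
move=> /allP pn ltin ltjn.
by move: (pn i); rewrite mem_iota ltin => /(_ isT) /allP; apply; rewrite mem_iota.
Qed.

Definition configA_solved (H : Fgraph) (i j : nat) : bool :=
  condA H i j ==> recipe_valid (Fnv H).+1 (edgesA H i j) (recipeA H i j)
                  && (Fnv H < size (support (recipeA H i j))).

Definition configB_solved (H : Fgraph) (i j : nat) : bool :=
  condB H i j ==> recipe_valid (Fnv H).+2 (edgesB H i j) (recipeB H i j)
                  && (Fnv H < size (support (recipeB H i j))).

Lemma configA_all_solved H : all_pairs (Fnv H) (configA_solved H).
Proof. by case: H; vm_compute. Qed.

Lemma configB_all_solved H : all_pairs (Fnv H) (configB_solved H).
Proof. by case: H; vm_compute. Qed.

Definition partial_partitioning (T : finType) (e : rel T) (P : {set {set T}}) : Prop :=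
  trivIset P /\ forall B, B \in P -> exists H, spans_copy e H B.

Definition improvable (T : finType) (e : rel T) (P : {set {set T}}) : Prop :=
  exists2 P', partial_partitioning e P' & #|cover P| < #|cover P'|.

Lemma partial_partitioning0 (T : finType) (e : rel T) : partial_partitioning e set0.
Proof. by split=> [|B]; [apply/trivIsetP => A B; rewrite inE | rewrite inE]. Qed.

Lemma full_cover_by_growth (T : finType) (Q : {set {set T}} -> Prop) :
  Q set0 -> (forall P, Q P -> cover P != [set: T] ->
               exists2 P', Q P' & #|cover P| < #|cover P'|) ->
  exists2 P, Q P & cover P = [set: T].
Proof.
move=> Q0 grow.
suff: forall n P, Q P -> #|T| - #|cover P| <= n -> exists2 P, Q P & cover P = [set: T].
  by apply; [exact: Q0 | exact: leq_subr].
elim=> [|n IH] P QP gap.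
  exists P => //; apply/eqP; rewrite eqEcard subsetT cardsT.
  by rewrite -subn_eq0 -leqn0.
have [coverP | full] := eqVneq (cover P) [set: T]; first by exists P.
have [P' QP' ltPP'] := grow P QP full.
by apply: (IH P' QP'); move: gap ltPP'; lia.
Qed.

Lemma partition_of_full_cover (T : finType) (e : rel T) (P : {set {set T}}) :
  partial_partitioning e P -> cover P = [set: T] -> F_partitioning e.
Proof.
move=> [tP bP] coverP; exists P; split=> //.
apply/and3P; split=> //; first by rewrite coverP.
apply/negP => /bP [H [f [_ f0]]].
have lt0H : 0 < Fnv H by case: H f f0.
by move: (imset_f f (isT : Ordinal lt0H \in 'I_(Fnv H))); rewrite -f0 inE.
Qed.

Lemma uniq_flatten_mem_eq (A : eqType) (ss : seq (seq A)) s1 s2 a :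
  uniq (flatten ss) -> s1 \in ss -> s2 \in ss -> a \in s1 -> a \in s2 -> s1 = s2.
Proof.
elim: ss => [|s ss IH] //=; rewrite cat_uniq => /and3P [_ sNss uss].
rewrite !inE => /predU1P [-> | s1ss] /predU1P [-> | s2ss] // as1 as2.
- by case/hasP: sNss; exists a => //; apply/flattenP; exists s2.
- by case/hasP: sNss; exists a => //; apply/flattenP; exists s1.
- exact: IH.
Qed.

Section Realisation.

Variables (T : finType) (e : rel T) (x0 : T) (gs : seq T) (E : seq (nat * nat)).
Hypotheses (e_sym : symmetric e) (gs_uniq : uniq gs).
Hypothesis gs_realises : all (fun ij => e (nth x0 gs ij.1) (nth x0 gs ij.2)) E.

Definition realise (s : seq nat) : {set T} := [set x in map (nth x0 gs) s].

Definition realise_family (rs : recipe) : {set {set T}} :=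
  [set B in [seq realise r.2 | r <- rs]].

Lemma realise_edge a b : edge_in E a b -> e (nth x0 gs a) (nth x0 gs b).
Proof. by have /allP gsE := gs_realises; case/orP => /gsE //=; rewrite e_sym. Qed.

Lemma nth_uniq_inj s : all (fun k => k < size gs) s -> {in s &, injective (nth x0 gs)}.
Proof. by move=> /allP lts p q /lts ? /lts ? /eqP; rewrite nth_uniq // => /eqP. Qed.

Lemma card_realise s : all (fun k => k < size gs) s -> uniq s -> #|realise s| = size s.
Proof.
move=> lts us; have ug : uniq (map (nth x0 gs) s).
  by rewrite (map_inj_in_uniq (nth_uniq_inj lts)).
by rewrite cardsE; move/card_uniqP: ug ->; rewrite size_map.
Qed.

Lemma realise_block r : block_fits (size gs) E r -> spans_copy e r.1 (realise r.2).
Proof.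
case: r => H s /and4P /= [/eqP sz us lts fits].
have ltsz (i : 'I_(Fnv H)) : i < size s by rewrite sz.
exists (fun i => nth x0 gs (nth 0 s i)); split; first split.
- move=> i j /eqP; rewrite nth_uniq ?(allP lts) ?mem_nth // nth_uniq //.
  by move/eqP/val_inj.
- by move=> i j ij; apply: realise_edge; exact: (allP fits _ ij).
- apply/setP => x; rewrite inE; apply/mapP/imsetP => [[k] | [i _ ->]].
    case/(nthP 0) => m lt_m <- ->; have lt_mH : m < Fnv H by rewrite -sz.
    by exists (Ordinal lt_mH).
  by exists (nth 0 s i); rewrite ?mem_nth.
Qed.

Lemma cover_realise_family rs : cover (realise_family rs) = realise (support rs).
Proof.
apply/setP => x; rewrite inE; apply/bigcupP/mapP.
  case=> B; rewrite inE => /mapP [r rrs ->]; rewrite inE => /mapP [k kr ->].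
  by exists k => //; apply/flatten_mapP; exists r.
case=> k /flatten_mapP [r rrs kr] ->; exists (realise r.2).
  by rewrite inE; apply/mapP; exists r.
by rewrite inE; apply/mapP; exists k.
Qed.

Lemma support_bounded rs :
  recipe_valid (size gs) E rs -> all (fun k => k < size gs) (support rs).
Proof.
case/andP => /allP fits _.
by apply/allP => k /flatten_mapP [r /fits /and4P [_ _ /allP lts _] /lts].
Qed.

Lemma realise_family_partial rs :
  recipe_valid (size gs) E rs -> partial_partitioning e (realise_family rs).
Proof.
move=> valid; have ltsupp := support_bounded valid.
case/andP: valid => /allP fits usupp; split; last first.
  by move=> B; rewrite inE => /mapP [r /fits rfits ->]; exists r.1; exact: realise_block.
apply/trivIsetP => A B; rewrite !inE => /mapP [r1 r1rs ->] /mapP [r2 r2rs ->].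
rewrite -setI_eq0; apply: contraR => /set0Pn [x]; rewrite !inE.
case/andP => /mapP [k1 k1r ->] /mapP [k2 k2r].
have insupp r k : r \in rs -> k \in r.2 -> k \in support rs.
  by move=> rrs kr; apply/flatten_mapP; exists r.
move/(nth_uniq_inj ltsupp (insupp _ _ r1rs k1r) (insupp _ _ r2rs k2r)) => ek.
suff -> : r1.2 = r2.2 by [].
by apply: (uniq_flatten_mem_eq usupp (map_f _ r1rs) (map_f _ r2rs) k1r); rewrite ek.
Qed.

Lemma card_cover_realise_family rs :
  recipe_valid (size gs) E rs -> #|cover (realise_family rs)| = size (support rs).
Proof.
move=> valid; rewrite cover_realise_family card_realise ?support_bounded //.
by case/andP: valid.
Qed.

End Realisation.

Lemma notin_cover_block (T : finType) (P : {set {set T}}) B u :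
  B \in P -> u \notin cover P -> u \notin B.
Proof. by move=> BP; apply: contra => uB; apply/bigcupP; exists B. Qed.

Lemma covered_block (T : finType) (e : rel T) P x :
  partial_partitioning e P -> x \in cover P ->
  exists H (f : 'I_(Fnv H) -> T) i,
    [/\ embeds e (Fedges H) f, [set f k | k in 'I_(Fnv H)] \in P & x = f i].
Proof.
move=> [_ bP] /bigcupP [B BP xB]; have [H [f [f_emb defB]]] := bP B BP.
by move: xB BP; rewrite defB => /imsetP [i _ ->] BP; exists H, f, i.
Qed.

Lemma nth_extend_ord (T : Type) n (f : 'I_n -> T) rest x0 (k : 'I_n) :
  nth x0 (map f (enum 'I_n) ++ rest) k = f k.
Proof.
by rewrite nth_cat size_map size_enum_ord ltn_ord (nth_map k) ?size_enum_ord ?nth_ord_enum.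
Qed.

Lemma nth_extend_rest (T : Type) n (f : 'I_n -> T) rest x0 m : n <= m ->
  nth x0 (map f (enum 'I_n) ++ rest) m = nth x0 rest (m - n).
Proof. by move=> le_nm; rewrite nth_cat size_map size_enum_ord ltnNge le_nm. Qed.

Section Growth.

Variables (T : finType) (e : rel T).
Hypothesis e_sym : symmetric e.

Lemma improvable_replace (P S Q : {set {set T}}) :
  partial_partitioning e P -> S \subset P -> partial_partitioning e Q ->
  cover Q \subset cover S :|: ~: cover P -> #|cover S| < #|cover Q| -> improvable e P.
Proof.
move=> [tP bP] sSP [tQ bQ] sQ ltSQ.
have RQ : [disjoint cover (P :\: S) & cover Q].
  rewrite disjoint_sym; apply: disjointWl sQ _; rewrite -setI_eq0; apply/eqP/setP => x.
  rewrite !inE; apply/negP => /andP [/orP [/bigcupP [B BS xB] | xNP]].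
    case/bigcupP => A /setDP [AP ANS] xA; move: ANS.
    by rewrite -(def_pblock tP AP xA) (def_pblock tP (subsetP sSP _ BS) xB) BS.
  by case/bigcupP => A /setDP [AP _] xA; case/negP: xNP; apply/bigcupP; exists A.
exists ((P :\: S) :|: Q).
  split; first exact: trivIsetU (trivIsetD S tP) tQ RQ.
  by move=> B /setUP [/setDP [/bP] | /bQ].
have coverP : cover P \subset cover (P :\: S) :|: cover S.
  apply/subsetP => x /bigcupP [A AP xA]; rewrite inE.
  by case: (boolP (A \in S)) => AS; apply/orP; [right | left];
    apply/bigcupP; exists A; rewrite ?inE ?AS ?AP.
have -> : cover ((P :\: S) :|: Q) = cover (P :\: S) :|: cover Q by rewrite /cover bigcup_setU.
rewrite cardsU (disjoint_setI0 RQ) cards0 subn0.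
apply: leq_ltn_trans (leq_trans (subset_leq_card coverP) (leq_card_setU _ _).1) _.
by rewrite ltn_add2l.
Qed.

Lemma improvable_by_recipe (P S : {set {set T}}) (x0 : T) gs E rs :
  partial_partitioning e P -> S \subset P -> uniq gs ->
  all (fun ij => e (nth x0 gs ij.1) (nth x0 gs ij.2)) E ->
  {subset gs <= cover S :|: ~: cover P} ->
  recipe_valid (size gs) E rs -> #|cover S| < size (support rs) -> improvable e P.
Proof.
move=> pP sSP ugs gsE sub valid lt.
apply: (improvable_replace pP sSP (realise_family_partial e_sym ugs gsE valid)).
  rewrite cover_realise_family; apply/subsetP => x; rewrite inE => /mapP [k ksupp ->].
  by apply/sub/mem_nth; exact: (allP (support_bounded valid)).
by rewrite (card_cover_realise_family _ ugs valid).
Qed.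

Lemma improvable_fresh (P : {set {set T}}) H (x0 : T) gs :
  partial_partitioning e P -> uniq gs -> size gs = Fnv H ->
  all (fun x => x \notin cover P) gs ->
  all (fun ij => e (nth x0 gs ij.1) (nth x0 gs ij.2)) (Fedges H) -> improvable e P.
Proof.
move=> pP ugs szgs /allP unc gsE.
apply: (improvable_by_recipe (rs := [:: (H, iota 0 (Fnv H))]) pP (sub0set P) ugs gsE).
- by move=> x /unc xNP; rewrite !inE xNP orbT.
- by rewrite szgs; case: H {szgs gsE}.
- by rewrite /cover big_set0 cards0 /support /= cats0 size_iota; case: H {szgs gsE}.
Qed.

End Growth.

Section Cubic.

Variables (T : finType) (e : rel T).
Hypotheses (e_sym : symmetric e) (e_irr : irreflexive e) (e_cubic : cubic e).

Lemma neq_of_edge x y : e x y -> x != y.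
Proof. by apply: contraTneq => ->; rewrite e_irr. Qed.

Section EmbeddedBlock.

Variables (H : Fgraph) (f : 'I_(Fnv H) -> T).
Hypothesis f_emb : embeds e (Fedges H) f.
Local Notation image := [set f k | k in 'I_(Fnv H)].

Lemma embedded_padj (i j : 'I_(Fnv H)) : padj H i j -> e (f i) (f j).
Proof. by case/orP => /(f_emb.2 _ _) //; rewrite e_sym. Qed.

Lemma nbhd_exit i w : e (f i) w -> w \notin image ->
  pdeg H i = 2 /\ [set y | e (f i) y] = w |: f @: [set j : 'I_(Fnv H) | padj H i j].
Proof.
move=> fiw wNim.
have sub : w |: f @: [set j : 'I_(Fnv H) | padj H i j] \subset [set y | e (f i) y].
  apply/subsetP => y /setU1P [-> | /imsetP [j]]; rewrite !inE // => ij ->.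
  exact: embedded_padj.
have card_sub : #|w |: f @: [set j : 'I_(Fnv H) | padj H i j]| = (pdeg H i).+1.
  rewrite cardsU1 card_imset ?card_padj; last exact: f_emb.1.
  by rewrite (contraNN _ wNim) // => /imsetP [j _ ->]; exact: imset_f.
have := subset_leq_card sub; rewrite card_sub e_cubic => le_deg.
have deg2 : pdeg H i = 2 by apply/eqP; rewrite eqn_leq -ltnS le_deg pdeg_ge2.
by split=> //; apply/esym/eqP; rewrite eqEcard sub card_sub deg2 e_cubic.
Qed.

Lemma exit_pdeg i w : e (f i) w -> w \notin image -> pdeg H i = 2.
Proof. by move=> fiw wNim; case: (nbhd_exit fiw wNim). Qed.

Lemma exit_nbr i w y : e (f i) w -> w \notin image -> e (f i) y -> y != w ->
  exists2 j : 'I_(Fnv H), padj H i j & y = f j.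
Proof.
move=> fiw wNim fiy yw; have [_ Nfi] := nbhd_exit fiw wNim.
have : y \in [set y | e (f i) y] by rewrite inE.
rewrite Nfi => /setU1P [yw' | /imsetP [j]]; first by rewrite yw' eqxx in yw.
by rewrite inE => ij ->; exists j.
Qed.

Lemma exit_unique i w w' : e (f i) w -> w \notin image -> e (f i) w' -> w' \notin image ->
  w' = w.
Proof.
move=> fiw wNim fiw' w'Nim; apply/eqP; apply: contraNT w'Nim => w'w.
by have [j _ ->] := exit_nbr fiw wNim fiw' w'w; exact: imset_f.
Qed.

Lemma exit_padj (i j : 'I_(Fnv H)) w : e (f i) w -> w \notin image -> e (f i) (f j) -> padj H i j.
Proof.
move=> fiw wNim fifj.
have fjw : f j != w by apply: contraNneq wNim => <-; exact: imset_f.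
by have [k ik /f_emb.1 ->] := exit_nbr fiw wNim fifj fjw.
Qed.

Lemma extension_realises (rest : seq T) x0 :
  all (fun ij => e (nth x0 (map f (enum 'I_(Fnv H)) ++ rest) ij.1)
                   (nth x0 (map f (enum 'I_(Fnv H)) ++ rest) ij.2)) (Fedges H).
Proof.
apply/allP => -[p q] pq; have /andP [ltp ltq] := allP (Fedges_bounded H) _ pq.
rewrite /= -[p]/(nat_of_ord (Ordinal ltp)) -[q]/(nat_of_ord (Ordinal ltq)).
by rewrite !nth_extend_ord; exact: f_emb.2.
Qed.

Lemma extension_uniq (P : {set {set T}}) rest :
  image \in P -> all (fun x => x \notin cover P) rest -> uniq rest ->
  uniq (map f (enum 'I_(Fnv H)) ++ rest).
Proof.
move=> imP /allP unc urest; rewrite cat_uniq (map_inj_uniq f_emb.1) enum_uniq urest andbT.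
apply/hasPn => x /unc; apply: contra => /mapP [k _ ->].
by apply/bigcupP; exists image; rewrite ?imset_f.
Qed.

Lemma extension_sub (P : {set {set T}}) rest :
  all (fun x => x \notin cover P) rest ->
  {subset map f (enum 'I_(Fnv H)) ++ rest <= cover [set image] :|: ~: cover P}.
Proof.
move=> /allP unc x; rewrite mem_cat cover1 => /orP [/mapP [k _ ->] | /unc xNP].
  by rewrite inE imset_f.
by rewrite !inE xNP orbT.
Qed.

Lemma card_cover_image : #|cover [set image]| = Fnv H.
Proof. by rewrite cover1 card_imset ?card_ord //; exact: f_emb.1. Qed.

End EmbeddedBlock.

Lemma improvable_configA P H (f : 'I_(Fnv H) -> T) (i j : 'I_(Fnv H)) u :
  partial_partitioning e P -> embeds e (Fedges H) f -> [set f k | k in 'I_(Fnv H)] \in P ->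
  u \notin cover P -> e u (f i) -> e u (f j) -> condA H i j -> improvable e P.
Proof.
move=> pP f_emb imP uNP ufi ufj cA.
have := all_pairsP (configA_all_solved H) (ltn_ord i) (ltn_ord j).
rewrite /configA_solved cA => /andP [valid more].
have unc : all (fun x => x \notin cover P) [:: u] by rewrite /= uNP.
apply: (improvable_by_recipe (x0 := u) (E := edgesA H i j) (rs := recipeA H i j) e_sym pP
         _ (extension_uniq f_emb imP unc _) _ (extension_sub (f := f) unc)).
- by rewrite sub1set.
- by [].
- rewrite all_cat extension_realises //=.
  by rewrite !nth_extend_ord nth_extend_rest // subnn ufi ufj.
- by rewrite size_cat size_map size_enum_ord addn1.
- by rewrite card_cover_image.
Qed.

Lemma improvable_configB P H (f : 'I_(Fnv H) -> T) (i j : 'I_(Fnv H)) u v :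
  partial_partitioning e P -> embeds e (Fedges H) f -> [set f k | k in 'I_(Fnv H)] \in P ->
  u \notin cover P -> v \notin cover P -> e u v -> e u (f i) -> e v (f j) -> condB H i j ->
  improvable e P.
Proof.
move=> pP f_emb imP uNP vNP uv ufi vfj cB.
have := all_pairsP (configB_all_solved H) (ltn_ord i) (ltn_ord j).
rewrite /configB_solved cB => /andP [valid more].
have unc : all (fun x => x \notin cover P) [:: u; v] by rewrite /= uNP vNP.
have urest : uniq [:: u; v] by rewrite /= inE neq_of_edge.
apply: (improvable_by_recipe (x0 := u) (E := edgesB H i j) (rs := recipeB H i j) e_sym pP
         _ (extension_uniq f_emb imP unc urest) _ (extension_sub (f := f) unc)).
- by rewrite sub1set.
- rewrite all_cat extension_realises //=.
  by rewrite !nth_extend_ord !nth_extend_rest // subnn subSnn ufi vfj uv.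
- by rewrite size_cat size_map size_enum_ord addn2.
- by rewrite card_cover_image.
Qed.

Lemma improvable_triangle P u x y :
  partial_partitioning e P -> u \notin cover P -> e u x -> e u y -> x != y -> e x y ->
  improvable e P.
Proof.
move=> pP uNP ux uy xy exy.
wlog xP : x y ux uy xy exy / x \in cover P.
  move=> hwlog; have [xP | xNP] := boolP (x \in cover P); first exact: (hwlog x y).
  have [yP | yNP] := boolP (y \in cover P).
    by apply: (hwlog y x); rewrite // 1?eq_sym 1?e_sym.
  apply: (@improvable_fresh _ _ e_sym P FC3 u [:: u; x; y]) => //=.
  - by rewrite !inE negb_or xy !neq_of_edge.
  - by rewrite uNP xNP yNP.
  - by rewrite ux exy e_sym uy.
have [H [f [i [f_emb imP xi]]]] := covered_block pP xP; subst x.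
have uNim := notin_cover_block imP uNP.
have fiu : e (f i) u by rewrite e_sym.
have yu : y != u by rewrite eq_sym neq_of_edge.
have [j ij yj] := exit_nbr f_emb fiu uNim exy yu; subst y.
have fju : e (f j) u by rewrite e_sym.
apply: (improvable_configA pP f_emb imP uNP ux uy).
rewrite /condA (exit_pdeg f_emb fiu uNim) (exit_pdeg f_emb fju uNim) ij !andbT.
by apply: contraNneq xy => /val_inj ->.
Qed.

Lemma improvable_square_uncovered P u x y z :
  partial_partitioning e P -> u \notin cover P -> x \notin cover P -> y \notin cover P ->
  e u x -> e u y -> x != y -> z != u -> e x z -> e y z -> improvable e P.
Proof.
move=> pP uNP xNP yNP ux uy xy zu xz yz.
have [zP | zNP] := boolP (z \in cover P).
  have [H [f [k [f_emb imP zk]]]] := covered_block pP zP; subst z.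
  have xNim := notin_cover_block imP xNP; have yNim := notin_cover_block imP yNP.
  case/eqP: xy; apply: (exit_unique f_emb (_ : e (f k) y) yNim (_ : e (f k) x) xNim);
    by rewrite e_sym.
apply: (@improvable_fresh _ _ e_sym P FC4 u [:: u; x; z; y]) => //=.
- rewrite !inE !negb_or xy (eq_sym u z) zu !neq_of_edge //.
  by rewrite e_sym.
- by rewrite uNP xNP zNP yNP.
- by rewrite ux xz (e_sym z) yz e_sym uy.
Qed.

Lemma improvable_square_covered P u x y z :
  partial_partitioning e P -> u \notin cover P -> x \in cover P ->
  e u x -> e u y -> x != y -> z != u -> e x z -> e y z -> improvable e P.
Proof.
move=> pP uNP xP ux uy xy zu xz yz.
have [H [f [i [f_emb imP xi]]]] := covered_block pP xP; subst x.
have uNim := notin_cover_block imP uNP.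
have fiu : e (f i) u by rewrite e_sym.
have [k ik zk] := exit_nbr f_emb fiu uNim xz zu; subst z.
have [yP | yNP] := boolP (y \in cover P); last first.
  have fky : e (f k) y by rewrite e_sym.
  apply: (improvable_configB pP f_emb imP uNP yNP uy ux yz).
  rewrite /condB (exit_pdeg f_emb fiu uNim) ik andbT /=.
  by rewrite (exit_pdeg f_emb fky (notin_cover_block imP yNP)).
have [H' [f' [j' [f'_emb im'P yj']]]] := covered_block pP yP; subst y.
have f'j'u : e (f' j') u by rewrite e_sym.
have [k' _ fkk'] := exit_nbr f'_emb f'j'u (notin_cover_block im'P uNP) yz zu.
have : f' j' \in [set f k | k in 'I_(Fnv H)].
  rewrite -(def_pblock pP.1 imP (imset_f f (isT : k \in 'I_(Fnv H)))) fkk'.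
  by rewrite (def_pblock pP.1 im'P (imset_f f' (isT : k' \in 'I_(Fnv H')))) imset_f.
case/imsetP => j _ yj; rewrite yj in uy yz xy.
have fju : e (f j) u by rewrite e_sym.
apply: (improvable_configA pP f_emb imP uNP ux uy).
rewrite /condA (exit_pdeg f_emb fiu uNim) (exit_pdeg f_emb fju uNim) /=.
apply/andP; split; first by apply: contraNneq xy => /val_inj ->.
apply/orP; right; apply/hasP; exists (k : nat); first by rewrite mem_iota ltn_ord.
by rewrite ik padjC (exit_padj f_emb fju uNim yz).
Qed.

Lemma improvable_square P u x y z :
  partial_partitioning e P -> u \notin cover P -> e u x -> e u y -> x != y -> z != u ->
  e x z -> e y z -> improvable e P.
Proof.
move=> pP uNP ux uy xy zu xz yz.
have [xP | xNP] := boolP (x \in cover P).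
  exact: improvable_square_covered pP uNP xP ux uy xy zu xz yz.
have [yP | yNP] := boolP (y \in cover P).
  by apply: improvable_square_covered pP uNP yP uy ux _ zu yz xz; rewrite eq_sym.
exact: improvable_square_uncovered pP uNP xNP yNP ux uy xy zu xz yz.
Qed.

Lemma cubic_nbhd x :
  exists x1 x2 x3, uniq [:: x1; x2; x3] /\ forall y, e x y = (y \in [:: x1; x2; x3]).
Proof.
have := e_cubic x; rewrite cardE.
move: (enum_uniq [set y | e x y]) (mem_enum [set y | e x y]).
case: (enum _) => [|x1 [|x2 [|x3 []]]] // uX mX _.
by exists x1, x2, x3; split=> // y; rewrite mX inE.
Qed.

Definition nbhd_but (x w : T) (s : seq T) : Prop :=
  forall y, ((y != w) && e x y) = (y \in s).

Lemma cubic_nbhd_but x w : e x w -> exists s, [/\ size s = 2, uniq s & nbhd_but x w s].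
Proof.
move=> xw; have := e_cubic x; rewrite (cardsD1 w) inE xw cardE => -[sz].
by exists (enum ([set y | e x y] :\ w)); split=> // [|y]; rewrite ?enum_uniq ?mem_enum ?inE.
Qed.

Section NoShortCycle.

Variable u : T.
Hypothesis no_triangle : forall x y, e u x -> e u y -> ~~ e x y.
Hypothesis no_square :
  forall x y z, e u x -> e u y -> x != y -> z != u -> e x z -> e y z -> False.

Lemma nbhd_but_not_nbhd a s : e u a -> nbhd_but a u s -> ~~ has (e u) s.
Proof.
move=> ua sa; apply/hasPn => y; rewrite -sa => /andP [_ ay].
by apply: contraL ay; exact: no_triangle.
Qed.

Lemma nbhd_but_disjoint a b s t : e u a -> e u b -> a != b ->
  nbhd_but a u s -> nbhd_but b u t -> ~~ has (mem s) t.
Proof.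
move=> ua ub ab sa tb; rewrite (eq_has (fun y => esym (sa y))).
apply/hasPn => y; rewrite -tb => /andP [yu yb].
by apply/negP => /andP [_ ay]; exact: no_square ua ub ab yu ay yb.
Qed.

Lemma contains_L_of_no_short_cycle : contains_L e.
Proof.
have [x1 [x2 [x3 [uX mX]]]] := cubic_nbhd u.
have [ux1 ux2 ux3] : [/\ e u x1, e u x2 & e u x3] by rewrite !mX !inE !eqxx !orbT.
have [n12 n13 n23] : [/\ x1 != x2, x1 != x3 & x2 != x3].
  by move: uX; rewrite /= !inE !negb_or => /and3P [/andP [-> ->] -> _].
have [L1 [sz1 u1 m1]] := cubic_nbhd_but (etrans (e_sym _ _) ux1).
have [L2 [sz2 u2 m2]] := cubic_nbhd_but (etrans (e_sym _ _) ux2).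
have [L3 [sz3 u3 m3]] := cubic_nbhd_but (etrans (e_sym _ _) ux3).
have : uniq (u :: [:: x1; x2; x3] ++ L1 ++ L2 ++ L3).
  rewrite cons_uniq mem_cat -mX e_irr !mem_cat -m1 -m2 -m3 !eqxx.
  have hasX s : has (mem [:: x1; x2; x3]) s = has (e u) s by apply: eq_has => y; rewrite mX.
  rewrite !cat_uniq !has_cat uX u1 u2 u3 (hasX L1) (hasX L2) (hasX L3).
  rewrite (negbTE (nbhd_but_not_nbhd ux1 m1)) (negbTE (nbhd_but_not_nbhd ux2 m2)).
  rewrite (negbTE (nbhd_but_not_nbhd ux3 m3)) (negbTE (nbhd_but_disjoint ux1 ux2 n12 m1 m2)).
  rewrite (negbTE (nbhd_but_disjoint ux1 ux3 n13 m1 m3)).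
  by rewrite (negbTE (nbhd_but_disjoint ux2 ux3 n23 m2 m3)).
have leaf a s y : nbhd_but a u s -> y \in s -> e a y by move=> sa; rewrite -sa => /andP [].
case: L1 sz1 u1 m1 => [|p1 [|q1 []]] // _ _ m1; case: L2 sz2 u2 m2 => [|p2 [|q2 []]] // _ _ m2.
case: L3 sz3 u3 m3 => [|p3 [|q3 []]] // _ _ m3.
set tree := u :: _ => utree; exists (nth u tree); split.
  by move=> i j /eqP; rewrite nth_uniq // => /eqP /val_inj.
have : all (fun ij => e (nth u tree ij.1) (nth u tree ij.2)) L_edges.
  by rewrite /= ux1 ux2 ux3 !(leaf _ _ _ m1, leaf _ _ _ m2, leaf _ _ _ m3) ?inE ?eqxx ?orbT.
by move=> /allP tree_edges i j /tree_edges.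
Qed.

End NoShortCycle.

Lemma short_cycle_at u : ~ contains_L e ->
  exists x y, [/\ e u x, e u y, x != y & e x y \/ exists z, [/\ z != u, e x z & e y z]].
Proof.
move=> noL.
have [|none] := boolP [exists x, exists y, [&& e u x, e u y, x != y &
    e x y || [exists z, [&& z != u, e x z & e y z]]]].
  case/existsP => x /existsP [y /and4P [ux uy xy /orP [exy | /existsP [z /and3P [zu xz yz]]]]].
    by exists x, y; split=> //; left.
  by exists x, y; split=> //; right; exists z.
case: noL; apply: (contains_L_of_no_short_cycle (u := u)) => [x y ux uy | x y z ux uy xy zu xz yz].
  have [<- | xy] := eqVneq x y; first by rewrite e_irr.
  apply: contra none => exy; apply/existsP; exists x; apply/existsP; exists y.
  by rewrite ux uy xy exy.
case/negP: none; apply/existsP; exists x; apply/existsP; exists y; rewrite ux uy xy /=.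
by apply/orP; right; apply/existsP; exists z; rewrite zu xz yz.
Qed.

Lemma improvable_of_uncovered P : ~ contains_L e -> partial_partitioning e P ->
  cover P != [set: T] -> improvable e P.
Proof.
move=> noL pP; rewrite eqEsubset subsetT /= => /subsetPn [u _ uNP].
have [x [y [ux uy xy [exy | [z [zu xz yz]]]]]] := short_cycle_at u noL.
  exact: improvable_triangle pP uNP ux uy xy exy.
exact: improvable_square pP uNP ux uy xy zu xz yz.
Qed.

End Cubic.

Theorem lemma2p3 (T : finType) (e : rel T) :
  symmetric e -> irreflexive e -> cubic e -> ~ contains_L e -> F_partitioning e.
Proof.
move=> e_sym e_irr e_cubic noL.
have [P pP coverP] := full_cover_by_growth (partial_partitioning0 e)
  (fun P => improvable_of_uncovered e_sym e_irr e_cubic noL).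
exact: partition_of_full_cover pP coverP.
Qed.
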